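(* Let $\alpha,\beta$ be real (or complex) parameters and let $k,m,s$ be non-negative integers with $s\le k$. Then $$\genfrac{\lfloor}{\rfloor}{0pt}{}{k+m}{k}^{\alpha,\beta}=\sum_{j=0}^{s}\left(\sum_{k-j\le i_1\le i_2\le\cdots\le i_{s-j}\le k}\ \prod_{l=0}^{s-j-1}\Big((\alpha+\beta)i_{l+1}+\alpha\big(m-(s-j-l)\big)\Big)\right)\genfrac{\lfloor}{\rfloor}{0pt}{}{k+m-s}{k-j}^{\alpha,\beta},$$ where, for $j=s$, the inner sum is over the empty tuple and equals $1$ (empty product).
   Context: For parameters $\alpha,\beta$, the generalized Stirling numbers $\genfrac{\lfloor}{\rfloor}{0pt}{}{n}{k}^{\alpha,\beta}$, $0\le k\le n$, are defined by the polynomial identity in $x$ $$x(x+\alpha)\cdots(x+(n-1)\alpha)=\sum_{k=0}^{n}\genfrac{\lfloor}{\rfloor}{0pt}{}{n}{k}^{\alpha,\beta}\,x(x-\beta)\cdots(x-(k-1)\beta),$$ (empty products equal $1$), and $\genfrac{\lfloor}{\rfloor}{0pt}{}{n}{k}^{\alpha,\beta}=0$ for $n<0$, $k<0$ or $k>n$. *)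

From mathcomp Require Import all_boot all_order all_algebra.
Set Implicit Arguments. Unset Strict Implicit. Unset Printing Implicit Defensive.
Import GRing.Theory.
Local Open Scope ring_scope.

Definition rise_poly (R : comNzRingType) (a : R) (n : nat) : {poly R} :=
  \prod_(i < n) ('X + (i%:R * a)%:P).

Definition fall_poly (R : comNzRingType) (b : R) (k : nat) : {poly R} :=
  \prod_(i < k) ('X - (i%:R * b)%:P).

(* S is the table of generalized Stirling numbers [n, k]^{alpha,beta}:
   it satisfies the defining polynomial identity for every n, and vanishes
   for k > n (negative indices never occur since indices are nat). *)
Definition is_gen_stirling (R : comNzRingType) (alpha beta : R)
  (S : nat -> nat -> R) : Prop :=
  (forall n : nat,
     rise_poly alpha n = \sum_(k < n.+1) S n k *: fall_poly beta k) /\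
  (forall n k : nat, (n < k)%N -> S n k = 0).

(* Comparing coefficients in the basis of falling products gives the
   triangular recurrence [S(n+1, k+1) = S(n, k) + ((k+1) beta + n alpha) S(n, k+1)].
   Applying it once to every term of the expansion at level [s] yields the
   expansion at level [s+1]: the new weights are absorbed into the sums over
   weakly increasing tuples by splitting off the first entry of a tuple
   according to whether it equals its lower bound [k - j] or exceeds it. *)

From mathcomp Require Import all_boot all_algebra.
From mathcomp Require Import ring zify.
Set Implicit Arguments. Unset Strict Implicit. Unset Printing Implicit Defensive.
Import GRing.Theory.
Local Open Scope ring_scope.

Section FallingBasis.
Variables (R : comNzRingType) (b : R).

Lemma fall_polyS k : fall_poly b k.+1 = fall_poly b k * ('X - (k%:R * b)%:P).
Proof. by rewrite /fall_poly big_ord_recr. Qed.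

Lemma fall_poly_monic k : fall_poly b k \is monic.
Proof. by apply: monic_prod => i _; apply: monicXsubC. Qed.

Lemma size_fall_poly k : size (fall_poly b k) = k.+1.
Proof.
elim: k => [|k IHk]; first by rewrite /fall_poly big_ord0 size_poly1.
by rewrite fall_polyS size_Mmonic ?monicXsubC ?monic_neq0 ?fall_poly_monic //
  size_XsubC IHk addn2.
Qed.

Lemma fall_polyMXaddC k c :
  fall_poly b k * ('X + c%:P) = fall_poly b k.+1 + (k%:R * b + c) *: fall_poly b k.
Proof. by rewrite fall_polyS -mul_polyC polyCD; ring. Qed.

Lemma fall_poly_free N (c : nat -> R) :
  \sum_(k < N) c k *: fall_poly b k = 0 -> forall k, (k < N)%N -> c k = 0.
Proof.
elim: N => [|N IHN] sum0 k ltkN //.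
move: sum0; rewrite big_ord_recr /= => sum0.
have cN0 : c N = 0.
  move/(congr1 (fun p : {poly R} => p`_N)): sum0.
  rewrite coefD coef_sum coefZ coef0 big1 => [|i _]; last first.
    by rewrite coefZ nth_default ?mulr0 // size_fall_poly.
  have := fall_poly_monic N; rewrite monicE lead_coefE size_fall_poly => /eqP ->.
  by rewrite add0r mulr1.
move: sum0; rewrite cN0 scale0r addr0 => sum0.
by case: (ltngtP k N) => [/(IHN sum0)| |->] //; lia.
Qed.

Lemma fall_poly_coord_unique N (c d : nat -> R) :
  \sum_(k < N) c k *: fall_poly b k = \sum_(k < N) d k *: fall_poly b k ->
  forall k, (k < N)%N -> c k = d k.
Proof.
move=> /eqP; rewrite -subr_eq0 -sumrB => /eqP sum0 k ltkN.
apply/eqP; rewrite -subr_eq0; apply/eqP.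
apply: (@fall_poly_free N (fun k => c k - d k)) ltkN.
by rewrite -[RHS]sum0; apply: eq_bigr => i _; rewrite scalerBl.
Qed.

End FallingBasis.

Lemma gen_stirlingS (R : comNzRingType) (alpha beta : R) (S : nat -> nat -> R) :
  is_gen_stirling alpha beta S -> forall n k,
  S n.+1 k.+1 = S n k + (k.+1%:R * beta + n%:R * alpha) * S n k.+1.
Proof.
move=> [expand S_gt] n k.
pose d j := (if j is j'.+1 then S n j' else 0) + S n j * (j%:R * beta + n%:R * alpha).
have riseS : rise_poly alpha n.+1 = \sum_(j < n.+2) d j *: fall_poly beta j.
  rewrite /rise_poly big_ord_recr /= -/(rise_poly alpha n) expand big_distrl /=.
  under eq_bigr do rewrite -scalerAl fall_polyMXaddC scalerDr scalerA.
  rewrite big_split /= [RHS](eq_bigr _ (fun j _ => scalerDl _ _ _)) big_split /=.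
  rewrite [X in _ = X + _]big_ord_recl /= scale0r add0r.
  by rewrite [X in _ = _ + X]big_ord_recr /= (S_gt _ _ (ltnSn n)) mul0r scale0r addr0.
have [ltkn|] := ltnP k.+1 n.+2; last by move=> ?; rewrite !S_gt ?mulr0 ?addr0 //; lia.
by rewrite (fall_poly_coord_unique (etrans (esym (expand _)) riseS) ltkn) mulrC.
Qed.

Section FfunCons.
Variables (T : Type) (n : nat).

Definition ffun_cons (x : T) (g : {ffun 'I_n -> T}) : {ffun 'I_n.+1 -> T} :=
  [ffun i => if unlift ord0 i is Some j then g j else x].

Lemma ffun_cons0 x g : ffun_cons x g ord0 = x.
Proof. by rewrite ffunE unlift_none. Qed.

Lemma ffun_cons_lift x g j : ffun_cons x g (lift ord0 j) = g j.
Proof. by rewrite ffunE liftK. Qed.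

Lemma ffun_cons_behead (f : {ffun 'I_n.+1 -> T}) :
  ffun_cons (f ord0) [ffun j => f (lift ord0 j)] = f.
Proof.
by apply/ffunP => i; case: (unliftP ord0 i) => [j ->|->];
  rewrite ?ffun_cons_lift ?ffun_cons0 ?ffunE.
Qed.

End FfunCons.

Section NondecreasingTuples.
Variable k : nat.

Definition nondecr_from (a : nat) n (f : {ffun 'I_n -> 'I_k.+1}) : bool :=
  [forall l, (a <= f l)%N] &&
  [forall l1 : 'I_n, forall l2 : 'I_n, (l1 <= l2)%N ==> (f l1 <= f l2)%N].

Lemma nondecr_from_cons a n x (g : {ffun 'I_n -> 'I_k.+1}) :
  nondecr_from a (ffun_cons x g) = (a <= x)%N && nondecr_from x g.
Proof.
have liftS (j1 j2 : 'I_n) : (lift ord0 j1 <= lift ord0 j2)%N = (j1 <= j2)%N.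
  by rewrite /= /bump /= !add1n ltnS.
apply/andP/andP => [[/forallP low /forallP mono]|].
  split; first by have := low ord0; rewrite ffun_cons0.
  apply/andP; split; apply/forallP => j.
    by have /forallP/(_ (lift ord0 j)) := mono ord0; rewrite ffun_cons0 ffun_cons_lift.
  apply/forallP => j2; have /forallP/(_ (lift ord0 j2)) := mono (lift ord0 j).
  by rewrite !ffun_cons_lift liftS.
move=> [le_ax /andP [/forallP low /forallP mono]].
split; apply/forallP => i; case: (unliftP ord0 i) => [j1 ->|->];
  rewrite ?ffun_cons_lift ?ffun_cons0 //.
- exact: leq_trans le_ax (low j1).
- apply/forallP => i2; case: (unliftP ord0 i2) => [j2 ->|->] //=.
  by rewrite ffun_cons_lift liftS; have /forallP := mono j1.
- apply/forallP => i2; case: (unliftP ord0 i2) => [j2 ->|->];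
    by rewrite ?ffun_cons_lift ?ffun_cons0 ?low ?leqnn ?implybT.
Qed.

Lemma nondecr_from_head_neq a n (f : {ffun 'I_n.+1 -> 'I_k.+1}) :
  nondecr_from a f && (f ord0 != a :> nat) = nondecr_from a.+1 f.
Proof.
rewrite /nondecr_from; apply/idP/idP.
  move=> /andP [/andP [/forallP low mono] f0_neq]; rewrite mono andbT.
  apply/forallP => l; move/forallP/(_ ord0)/forallP/(_ l): (mono).
  by move=> /implyP/(_ (leq0n _)); apply: leq_trans; rewrite ltn_neqAle eq_sym f0_neq low.
move=> /andP [/forallP low ->]; rewrite andbT; apply/andP; split.
  by apply/forallP => l; apply: ltnW (low l).
by rewrite neq_ltn low orbT.
Qed.

Variables (R : pzSemiRingType) (w : nat -> nat -> R).

Definition nondecr_sum n a : R :=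
  \sum_(f : {ffun 'I_n -> 'I_k.+1} | nondecr_from a f) \prod_(l < n) w (n - l) (f l).

Lemma nondecr_sum0 a : nondecr_sum 0 a = 1.
Proof.
rewrite /nondecr_sum (eq_bigl predT) => [|f]; last by apply/andP; split; apply/forallP => -[].
under eq_bigr do rewrite big_ord0.
by rewrite sumr_const card_ffun [X in (_ ^ X)%N]card_ord.
Qed.

Lemma nondecr_sum_gt n a : (k < a)%N -> nondecr_sum n.+1 a = 0.
Proof.
move=> lt_ka; rewrite /nondecr_sum big_pred0 // => f.
apply/negbTE/negP => /andP [/forallP /(_ ord0) le_af _].
by have := leq_trans lt_ka le_af; rewrite ltnNge -ltnS ltn_ord.
Qed.

Lemma nondecr_sumS n a : (a <= k)%N ->
  nondecr_sum n.+1 a = w n.+1 a * nondecr_sum n a + nondecr_sum n.+1 a.+1.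
Proof.
move=> le_ak; have inordE : (inord a : 'I_k.+1) = a :> nat by rewrite inordK.
rewrite /nondecr_sum (bigID (fun f : {ffun 'I_n.+1 -> 'I_k.+1} => f ord0 == a :> nat)) /=.
congr (_ + _); last by apply: eq_bigl => f; rewrite nondecr_from_head_neq.
rewrite big_distrr /= (reindex (ffun_cons (inord a))) /=; last first.
  exists (fun f => [ffun j => f (lift ord0 j)]) => g.
    by move=> _; apply/ffunP => j; rewrite ffunE ffun_cons_lift.
  rewrite inE => /andP [_ /eqP f0]; rewrite -[RHS]ffun_cons_behead.
  by congr ffun_cons; apply: val_inj; rewrite /= inordE f0.
apply: eq_big => [g|g _].
  by rewrite nondecr_from_cons ffun_cons0 inordE leqnn eqxx andbT.
rewrite big_ord_recl ffun_cons0 inordE subn0; congr (_ * _).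
by apply: eq_bigr => j _; rewrite ffun_cons_lift /= /bump /= add1n subSS.
Qed.

End NondecreasingTuples.

Definition stirling_weight (R : pzRingType) (alpha beta : R) (m n i : nat) : R :=
  (alpha + beta) * i%:R + alpha * (m%:R - n%:R).

Section Expansion.
Variables (R : comNzRingType) (alpha beta : R) (S : nat -> nat -> R).
Hypothesis S_gen_stirling : is_gen_stirling alpha beta S.
Variables k m : nat.

Local Notation T := (nondecr_sum k (stirling_weight alpha beta m)).

Lemma gen_stirling_expansionS s : (s < k)%N ->
  \sum_(j < s.+1) T (s - j) (k - j) * S (k + m - s)%N (k - j) =
  \sum_(j < s.+2) T (s.+1 - j) (k - j) * S (k + m - s.+1)%N (k - j).
Proof.
move=> lt_sk; set N := (k + m - s.+1)%N.
have -> : (k + m - s = N.+1)%N by rewrite /N; lia.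
have S_N1 (j : 'I_s.+1) : S N.+1 (k - j) =
    S N (k - j.+1) + stirling_weight alpha beta m (s - j).+1 (k - j) * S N (k - j).
  have lt_js := ltn_ord j; have lt_jk : (j < k)%N by apply: leq_trans lt_js _.
  have -> : (k - j = (k - j.+1).+1)%N by lia.
  rewrite (gen_stirlingS S_gen_stirling) /stirling_weight; congr (_ + _ * _).
  have -> : (m%:R : R) = N%:R + (s - j).+1%:R - (k - j.+1).+1%:R.
    by apply/eqP; rewrite eq_sym subr_eq -!natrD; apply/eqP; congr _%:R; rewrite /N; lia.
  by ring.
under eq_bigr => j _ do rewrite S_N1 mulrDr mulrCA mulrA.
rewrite big_split /= big_ord_recr /= subnn nondecr_sum0 mul1r.
rewrite [RHS]big_ord_recr /= subnn nondecr_sum0 mul1r.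
have shiftE : \sum_(j < s.+1) T (s.+1 - j) (k - j) * S N (k - j) =
    \sum_(j < s.+1) stirling_weight alpha beta m (s - j).+1 (k - j) *
                    T (s - j) (k - j) * S N (k - j) +
    \sum_(j < s) T (s - j) (k - j) * S N (k - j.+1).
  under eq_bigr => j _ do rewrite (subSn (ltnSE (ltn_ord j))) nondecr_sumS ?leq_subr // mulrDl.
  rewrite big_split /= [X in _ + X = _]big_ord_recl /= nondecr_sum_gt ?subn0 //.
  rewrite mul0r add0r; congr (_ + _).
  apply: eq_bigr => j _; have lt_js := ltn_ord j.
  by rewrite /bump /= add1n !subnSK //; apply: leq_trans lt_js _; apply: ltnW.
by rewrite shiftE addrAC (addrC (\sum_(i < s) _)).
Qed.

Lemma gen_stirling_expansion s : (s <= k)%N ->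
  S (k + m)%N k = \sum_(j < s.+1) T (s - j) (k - j) * S (k + m - s)%N (k - j).
Proof.
elim: s => [_|s IHs lt_sk]; first by rewrite big_ord1 !subn0 nondecr_sum0 mul1r.
by rewrite (IHs (ltnW lt_sk)); apply: gen_stirling_expansionS.
Qed.
End Expansion.

Theorem theorem8 (R : fieldType) (alpha beta : R) (S : nat -> nat -> R)
  (HS : is_gen_stirling alpha beta S) (k m s : nat) (hsk : (s <= k)%N) :
  S (k + m)%N k =
  \sum_(j < s.+1)
    (\sum_(f : {ffun 'I_(s - j) -> 'I_k.+1} |
           [forall l : 'I_(s - j), (k - j <= f l)%N] &&
           [forall l1 : 'I_(s - j), forall l2 : 'I_(s - j), (l1 <= l2)%N ==> (f l1 <= f l2)%N])
       \prod_(l < s - j)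
          ((alpha + beta) * (f l)%:R
           + alpha * (m%:R - (s - j - l)%:R)))
    * S (k + m - s)%N (k - j)%N.
Proof. exact: gen_stirling_expansion. Qed.
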